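(* Let $P\subseteq\mathbb{R}^2$ be a convex polygon such that $\tau P=P^{\circ}$. Then $P$ has at least $6$ vertices.
   Context: $\tau:\mathbb{R}^2\to\mathbb{R}^2$ denotes the $90^\circ$ counterclockwise rotation. The polar of $P$ is $P^{\circ}=\{x\in\mathbb{R}^2: y^\top x\le 1\text{ for all }y\in P\}$. *)

From mathcomp Require Import all_boot all_order all_algebra.
From mathcomp Require Import reals.
Set Implicit Arguments. Unset Strict Implicit. Unset Printing Implicit Defensive.
Import Order.TTheory GRing.Theory Num.Theory.
Local Open Scope ring_scope.

Section Defs.
Variable R : realType.

Definition point := (R * R)%type.

Definition dot (x y : point) : R := x.1 * y.1 + x.2 * y.2.

Definition tau (x : point) : point := (- x.2, x.1).

Definition tau_img (P : point -> Prop) : point -> Prop :=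
  fun x => exists y, P y /\ x = tau y.

Definition polar (P : point -> Prop) : point -> Prop :=
  fun x => forall y, P y -> dot y x <= 1.

Definition conv_hull (S : seq point) : point -> Prop :=
  fun x => exists w : 'I_(size S) -> R,
    (forall i, 0 <= w i) /\ \sum_(i < size S) w i = 1 /\
    x.1 = \sum_(i < size S) w i * (nth (0, 0) S i).1 /\
    x.2 = \sum_(i < size S) w i * (nth (0, 0) S i).2.

Definition convex_polygon (P : point -> Prop) : Prop :=
  exists S : seq point, forall x, P x <-> conv_hull S x.

Definition is_vertex (P : point -> Prop) (x : point) : Prop :=
  P x /\ forall y z : point, P y -> P z -> forall t : R, 0 < t < 1 ->
    x = (t * y.1 + (1 - t) * z.1, t * y.2 + (1 - t) * z.2) -> y = x /\ z = x.

End Defs.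

(* Since [dot y (tau x) = cross x y], the hypothesis says that
   P = {x | cross x y <= 1 for all y in P}.  Hence P is convex, centrally
   symmetric and absorbing, and, being a polygon, it is the convex hull of its
   vertices.  Pick vertices a, b with k = cross a b <> 0; then |k| <= 1.  If
   +-a, +-b were the only vertices, the point x = (a + b) / k would satisfy
   cross x v <= 1 at every vertex v, hence lie in P; but y |-> cross y (b - a)
   is bounded by |k| on the vertices, hence on P, and equals 2 at x.  So there
   is a third vertex c, and +-a, +-b, +-c are six distinct vertices. *)

From Stdlib Require Import Classical.
From mathcomp Require Import all_boot all_order all_algebra.
From mathcomp Require Import reals ring lra.
Set Implicit Arguments. Unset Strict Implicit. Unset Printing Implicit Defensive.
Import Order.TTheory GRing.Theory Num.Theory.
Local Open Scope ring_scope.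

Lemma uniq_opp3 (V : zmodType) (a b c : V) :
  (forall x : V, x = - x -> x = 0) ->
  a != 0 -> b \notin [:: 0; a; - a] -> c \notin [:: 0; a; - a; b; - b] ->
  uniq [:: a; - a; b; - b; c; - c].
Proof.
move=> V2 a0; rewrite !inE !negb_or => /and3P[b0 ba bNa] /and5P[c0 ca cNa cb cNb].
have xN (x : V) : x != 0 -> x != - x := contra_neq (V2 x).
rewrite /= !inE !negb_or !eqr_opp !xN // -!eqr_oppLR.
by rewrite ![_ == b]eq_sym ![_ == c]eq_sym ba bNa ca cNa cb cNb.
Qed.

Section PlaneConvexity.
Variable R : realType.
Local Notation point := (point R).
Implicit Types (x y z s w : point) (t : R) (S : seq point).

Definition cross x y : R := x.1 * y.2 - x.2 * y.1.

Definition comb t x y : point := (t * x.1 + (1 - t) * y.1, t * x.2 + (1 - t) * y.2).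

Definition convex (C : point -> Prop) :=
  forall x y t, C x -> C y -> 0 <= t <= 1 -> C (comb t x y).

Definition affine (f : point -> R) :=
  forall t x y, f (comb t x y) = t * f x + (1 - t) * f y.

(* [hull (s :: S)] is the union of the segments from [s] to [hull S]; the
   disjunct [t = 1] puts [s] in it even when [hull S] is empty. *)
Fixpoint hull S : point -> Prop :=
  if S is s :: S' then fun x =>
    exists t y, 0 <= t <= 1 /\ (t = 1 \/ hull S' y) /\ x = comb t s y
  else fun _ => False.

Lemma comb1 x y : comb 1 x y = x.
Proof. by case: x => x1 x2; rewrite /comb /=; congr pair; ring. Qed.

Lemma comb0 x y : comb 0 x y = y.
Proof. by case: y => y1 y2; rewrite /comb /=; congr pair; ring. Qed.

Lemma combN t x y : comb t (- x) (- y) = - comb t x y.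
Proof. by apply: injective_projections; rewrite /=; ring. Qed.

Lemma comb_eq_l t x y : t != 1 -> comb t x y = x -> y = x.
Proof.
move=> t_neq1; case: x y => x1 x2 [y1 y2] [e1 e2].
have t1 : 1 - t != 0 by rewrite subr_eq0 eq_sym.
by congr pair; apply: (mulfI t1); apply/eqP; rewrite -subr_eq0; apply/eqP; lra.
Qed.

Lemma affine_crossl z : affine (cross^~ z).
Proof. by move=> t x y; rewrite /cross /comb /=; ring. Qed.

Lemma affine_crossr z : affine (cross z).
Proof. by move=> t x y; rewrite /cross /comb /=; ring. Qed.

Lemma crossxx x : cross x x = 0.
Proof. by rewrite /cross mulrC subrr. Qed.

Lemma crossC x y : cross y x = - cross x y.
Proof. by rewrite /cross; ring. Qed.

Lemma crossNl x y : cross (- x) y = - cross x y.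
Proof. by rewrite /cross /=; ring. Qed.

Lemma crossNr x y : cross x (- y) = - cross x y.
Proof. by rewrite /cross /=; ring. Qed.

Lemma crossBr x y z : cross x (y - z) = cross x y - cross x z.
Proof. by rewrite /cross /=; ring. Qed.

Lemma crossr0 x : cross x 0 = 0.
Proof. by rewrite /cross /= !mulr0 subrr. Qed.

Lemma cross_tau_gt0 x : x != 0 -> 0 < cross x (tau x).
Proof.
case: x => x1 x2 x_neq0; rewrite /cross /tau /= mulrN opprK -!expr2.
rewrite lt_neqAle eq_sym paddr_eq0 ?sqr_ge0 // !sqrf_eq0 addr_ge0 ?sqr_ge0 // andbT.
by apply: contra x_neq0 => /andP[/eqP-> /eqP->].
Qed.

Lemma cross_neq0_notin x y : cross x y != 0 -> y \notin [:: 0; x; - x].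
Proof.
apply: contra; rewrite !inE => /or3P[]/eqP->.
- by rewrite crossr0.
- by rewrite crossxx.
- by rewrite crossNr crossxx oppr0.
Qed.

Lemma point_eqN x : x = - x -> x = 0.
Proof. by case: x => x1 x2 [e1 e2]; apply: injective_projections => /=; lra. Qed.

Lemma convex_le (f : point -> R) c : affine f -> convex (fun y => f y <= c).
Proof.
move=> f_aff x y t fx fy /andP[t0 t1]; rewrite f_aff.
have -> : c = t * c + (1 - t) * c by ring.
by rewrite lerD // ler_wpM2l // subr_ge0.
Qed.

Lemma comb_comb (H : point -> Prop) s y z t t1 t2 :
  convex H -> 0 <= t <= 1 -> 0 <= t1 <= 1 -> 0 <= t2 <= 1 ->
  (t1 = 1 \/ H y) -> (t2 = 1 \/ H z) ->
  exists w, (t * (1 - t1) + (1 - t) * (1 - t2) = 0 \/ H w) /\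
    comb t (comb t1 s y) (comb t2 s z)
    = comb (1 - (t * (1 - t1) + (1 - t) * (1 - t2))) s w.
Proof.
move=> H_conv t01 t1_01 t2_01 Hy Hz.
set a := t * (1 - t1); set b := (1 - t) * (1 - t2).
have a_ge0 : 0 <= a by apply: mulr_ge0; lra.
have b_ge0 : 0 <= b by apply: mulr_ge0; lra.
have E u v v' : t * (t1 * u + (1 - t1) * v) + (1 - t) * (t2 * u + (1 - t2) * v')
    = (1 - (a + b)) * u + a * v + b * v' by rewrite /a /b; ring.
have [ab0|ab_neq0] := eqVneq (a + b) 0.
  have [a0 b0] : a = 0 /\ b = 0 by split; lra.
  exists s; split; first by left.
  by rewrite /comb /= !E ab0 a0 b0; congr pair; ring.
have ab_gt0 : 0 < a + b by rewrite lt0r ab_neq0; lra.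
exists (comb (a / (a + b)) y z); split; last first.
  by rewrite /comb /= !E; congr pair; field.
right; case: Hy => [t1E|Hy].
  have a0 : a = 0 by rewrite /a t1E; ring.
  case: Hz => [t2E|Hz]; last by rewrite a0 mul0r comb0.
  by move: ab_neq0; rewrite a0 /b t2E subrr mulr0 addr0 eqxx.
case: Hz => [t2E|Hz].
  have b0 : b = 0 by rewrite /b t2E; ring.
  by move: ab_neq0; rewrite b0 !addr0 => a_neq0; rewrite divff ?comb1.
apply: H_conv => //; rewrite divr_ge0 ?(ltW ab_gt0) //=.
by rewrite ler_pdivrMr // mul1r lerDl.
Qed.

Lemma hull_convex S : convex (hull S).
Proof.
elim: S => [|s S IH] x y t //= [t1 [y' [t1_01 [Hy' ->]]]].
move=> [t2 [z' [t2_01 [Hz' ->]]]] t01.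
have [w [Hw ->]] := comb_comb s IH t01 t1_01 t2_01 Hy' Hz'.
exists (1 - (t * (1 - t1) + (1 - t) * (1 - t2))), w; split; first nra.
by split => //; case: Hw => [->|]; [left; rewrite subr0 | right].
Qed.

Lemma hull_mem S s : s \in S -> hull S s.
Proof.
elim: S => [|s' S IH] //; rewrite inE => /predU1P [->|sS].
  by exists 1, s; rewrite comb1; split; [lra | split; [left|]].
by exists 0, s; rewrite comb0; split; [lra | split; [right; apply: IH|]].
Qed.

Lemma hull_min (C : point -> Prop) S :
  convex C -> (forall s, s \in S -> C s) -> forall x, hull S x -> C x.
Proof.
move=> C_conv; elim: S => [|s S IH] //= SC x [t [y [t01 [Hy ->]]]].
have Cs : C s by apply: SC; rewrite mem_head.
case: Hy => [->|Hy]; first by rewrite comb1.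
by apply: C_conv => //; apply: IH => // z zS; apply: SC; rewrite inE zS orbT.
Qed.

Lemma hull_sub S S' : {subset S <= S'} -> forall x, hull S x -> hull S' x.
Proof.
by move=> sub; apply: hull_min => [|s /sub]; [exact: hull_convex | exact: hull_mem].
Qed.

Lemma hull_le (f : point -> R) c S :
  affine f -> (forall s, s \in S -> f s <= c) -> forall x, hull S x -> f x <= c.
Proof. by move=> f_aff; apply: hull_min; apply: convex_le. Qed.

Lemma conv_hull_cons s S x : conv_hull (s :: S) x ->
  exists t y, 0 <= t <= 1 /\ (t = 1 \/ conv_hull S y) /\ x = comb t s y.
Proof.
case: x => x1 x2 [w [w_ge0 [w_sum [/= -> ->]]]].
move: w_sum; rewrite !big_ord_recl /= => w_sum.
set W := w ord0 in w_sum *; set w' := fun i => w (lift ord0 i).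
have w'_ge0 i : 0 <= w' i by apply: w_ge0.
have w'_sum : \sum_(i < size S) w' i = 1 - W by rewrite -w_sum addrC addKr.
pose v i := w' i / (1 - W).
have w'E i : w' i = (1 - W) * v i.
  have [W1|W_neq1] := eqVneq W 1; last by rewrite mulrC divfK // subr_eq0 eq_sym.
  have /psumr_eq0P w'0 : \sum_(i < size S) w' i = 0 by rewrite w'_sum W1 subrr.
  by rewrite w'0 // W1 subrr mul0r.
exists W, (\sum_(i < size S) v i * (nth (0, 0) S i).1,
           \sum_(i < size S) v i * (nth (0, 0) S i).2).
have W_le1 : W <= 1 by rewrite -subr_ge0 -w'_sum; apply: sumr_ge0.
split; first by rewrite W_le1 w_ge0.
split; last first.
  rewrite /comb /= !mulr_sumr; congr (_ + _, _ + _);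
  by apply: eq_bigr => i _; rewrite -[w _]/(w' i) w'E /v !mulrA.
have [W1|W_neq1] := eqVneq W 1; [by left | right].
exists v; split; first by move=> i; rewrite divr_ge0 // subr_ge0.
by split => //; rewrite -mulr_suml w'_sum divff // subr_eq0 eq_sym.
Qed.

Lemma conv_hull_hull S x : conv_hull S x -> hull S x.
Proof.
elim: S x => [|s S IH] x.
  by case=> w [_ [w_sum _]]; move: w_sum; rewrite big_ord0 => /esym/eqP; rewrite oner_eq0.
move=> /conv_hull_cons [t [y [t01 [Hy ->]]]].
by exists t, y; split => //; split => //; case: Hy => [|/IH]; [left | right].
Qed.

Lemma mem_conv_hull S s : s \in S -> conv_hull S s.
Proof.
move=> sS; have jS : (index s S < size S)%N by rewrite index_mem.
pose j := Ordinal jS.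
have sum_delta (F : 'I_(size S) -> R) : \sum_(i < size S) (i == j)%:R * F i = F j.
  by rewrite (bigD1 j) //= eqxx mul1r big1 ?addr0 // => i /negPf ->; rewrite mul0r.
exists (fun i => (i == j)%:R); split; first by move=> i; apply: ler0n.
split; first by rewrite -[RHS](sum_delta (fun=> 1)); apply: eq_bigr => i _; rewrite mulr1.
by rewrite !sum_delta /= nth_index.
Qed.

Lemma hull_cons_vertex (P : point -> Prop) s S :
  (forall x, P x -> hull (s :: S) x) -> P s -> ~ hull S s -> is_vertex P s.
Proof.
move=> P_hull Ps s_out; split=> // y' z' /P_hull[t1 [y [t1_01 [Hy ->]]]].
move=> /P_hull[t2 [z [t2_01 [Hz ->]]]] t t01 s_comb.
have t01' : 0 <= t <= 1 by lra.
have [w [Hw w_comb]] := comb_comb s (@hull_convex S) t01' t1_01 t2_01 Hy Hz.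
have [c0|c_neq0] := eqVneq (t * (1 - t1) + (1 - t) * (1 - t2)) 0.
  have [-> ->] : t1 = 1 /\ t2 = 1 by split; nra.
  by rewrite !comb1.
case: Hw => [/eqP|Hw]; first by rewrite (negPf c_neq0).
suff ws : w = s by case: s_out; rewrite -ws.
apply: (comb_eq_l (t := 1 - (t * (1 - t1) + (1 - t) * (1 - t2)))).
  by apply: contra_neq c_neq0 => ?; lra.
by rewrite -w_comb.
Qed.

Lemma hull_vertices (P : point -> Prop) S : (forall x, P x <-> hull S x) ->
  exists T, (forall v, v \in T -> is_vertex P v) /\ (forall x, P x -> hull T x).
Proof.
have [n] := ubnP (size S); elim: n S => // n IH S /ltnSE size_S PS.
have S_perm s : s \in S -> S =i s :: rem s S by move=> sS; apply/perm_mem/perm_to_rem.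
case: (classic (exists2 s, s \in S & hull (rem s S) s)) => [[s sS s_red]|irred].
  apply: (IH (rem s S)).
    by rewrite (leq_trans _ size_S) // (perm_size (perm_to_rem sS)).
  move=> x; rewrite PS; split; last by apply: hull_sub => y /mem_rem.
  apply: hull_min; first exact: hull_convex.
  by move=> y; rewrite (S_perm s) // inE => /predU1P[->|/hull_mem].
exists S; split=> [s sS|x /PS //]; apply: (@hull_cons_vertex _ s (rem s S)).
- by move=> x /PS; apply: hull_sub => y; rewrite (S_perm s).
- exact/PS/hull_mem.
- by move=> s_red; apply: irred; exists s.
Qed.

Lemma dot_tau x y : dot y (tau x) = cross x y.
Proof. by rewrite /dot /tau /cross /=; ring. Qed.

Lemma tau_inj : injective (@tau R).
Proof. by case=> x1 x2 [y1 y2] [/eqP]; rewrite eqr_opp => /eqP -> ->. Qed.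

Lemma tau_img_polarE (P : point -> Prop) :
  (forall x, tau_img P x <-> polar P x) ->
  forall x, P x <-> forall y, P y -> cross x y <= 1.
Proof.
move=> tauP x; split=> [Px y Py|Hx].
  by rewrite -dot_tau; apply: (proj1 (tauP _)) Py; exists x.
have /tauP[x' [Px' /tau_inj ->]] // : polar P (tau x).
by move=> y /Hx; rewrite dot_tau.
Qed.

Lemma is_vertexN (P : point -> Prop) v :
  (forall x, P x -> P (- x)) -> is_vertex P v -> is_vertex P (- v).
Proof.
move=> PN [Pv v_ext]; split=> [|y z Py Pz t t01 v_comb]; first exact: PN.
change (- v = comb t y z) in v_comb.
have v_comb' : v = comb t (- y) (- z) by rewrite combN -v_comb opprK.
have [vy vz] := v_ext _ _ (PN _ Py) (PN _ Pz) t t01 v_comb'.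
by split; apply: oppr_inj; rewrite opprK.
Qed.

Lemma is_vertex0 (P : point -> Prop) a :
  (forall x, P x -> P (- x)) -> is_vertex P 0 -> P a -> a = 0.
Proof.
move=> PN [_ ext] Pa; have [] // := ext a (- a) Pa (PN _ Pa) (1 / 2); first lra.
by apply: injective_projections => /=; field.
Qed.


End PlaneConvexity.

Section SelfPolar.
Variables (R : realType) (P : point R -> Prop) (S : seq (point R)).
Hypothesis P_conv_hull : forall x, P x <-> conv_hull S x.
Hypothesis P_self_polar : forall x, P x <-> forall y, P y -> cross x y <= 1.

Lemma self_polar_convex : convex P.
Proof.
move=> x y t Px Py t01; apply/P_self_polar => z Pz.
by apply: (convex_le (c := 1) (affine_crossl z)) _ _ t01; apply: (proj1 (P_self_polar _)).
Qed.

Lemma self_polar_oppr x : P x -> P (- x).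
Proof.
move=> Px; apply/P_self_polar => y Py; rewrite crossNl -crossC.
exact: (proj1 (P_self_polar y)).
Qed.

Lemma self_polar_hull x : P x <-> hull S x.
Proof.
split=> [/P_conv_hull/conv_hull_hull //|]; apply: hull_min self_polar_convex _ x.
by move=> s /mem_conv_hull/P_conv_hull.
Qed.

Lemma self_polar_absorbing d : exists2 e, 0 < e & P (e * d.1, e * d.2).
Proof.
pose M := \sum_(s <- S) `|cross d s|.
have M_ge0 : 0 <= M by apply: sumr_ge0.
have le_M y : P y -> cross d y <= M.
  move=> /self_polar_hull Sy; apply: (hull_le (affine_crossr d) _ Sy) => s sS.
  rewrite /M (perm_big _ (perm_to_rem sS)) big_cons /=.
  by apply: le_trans (ler_norm _) _; rewrite lerDl sumr_ge0.
have M1_gt0 : 0 < M + 1 by lra.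
exists (M + 1)^-1; first by rewrite invr_gt0.
apply/P_self_polar => y Py.
have -> : cross ((M + 1)^-1 * d.1, (M + 1)^-1 * d.2) y = (M + 1)^-1 * cross d y.
  by rewrite /cross /=; ring.
by rewrite mulrC ler_pdivrMr // mul1r; have := le_M y Py; lra.
Qed.

Variable T : seq (point R).
Hypothesis P_sub_hull : forall x, P x -> hull T x.

Lemma exists_cross_neq0 d : d != 0 -> exists2 t, t \in T & cross d t != 0.
Proof.
move=> d_neq0; apply: NNPP => none.
have cross0 t : t \in T -> cross d t <= 0.
  move=> tT; rewrite le_eqVlt; apply/orP; left.
  by apply: NNPP => /negP ?; apply: none; exists t.
have [e e_gt0 Pe] := self_polar_absorbing (tau d).
have := hull_le (affine_crossr d) cross0 (P_sub_hull Pe).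
have -> : cross d (e * (tau d).1, e * (tau d).2) = e * cross d (tau d).
  by rewrite /cross /=; ring.
by rewrite pmulr_rle0 // leNgt cross_tau_gt0.
Qed.

Lemma exists_vertex_off_parallelogram a b :
  P a -> P b -> cross a b != 0 -> exists2 c, c \in T & c \notin [:: a; - a; b; - b].
Proof.
move=> Pa Pb k_neq0; apply: NNPP => none.
have in4 t : t \in T -> t \in [:: a; - a; b; - b].
  by move=> tT; apply: NNPP => /negP ?; apply: none; exists t.
set k := cross a b in k_neq0.
have k_le1 : `|k| <= 1.
  have := proj1 (P_self_polar b) Pb a Pa; rewrite crossC -/k => ?.
  by rewrite ler_norml (proj1 (P_self_polar a) Pa b Pb) andbT; lra.
pose x : point R := ((a.1 + b.1) / k, (a.2 + b.2) / k).
have xa : cross x a = -1 by rewrite /x /k /cross /=; field.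
have xb : cross x b = 1 by rewrite /x /k /cross /=; field.
have Px : P x.
  apply/P_self_polar => y /P_sub_hull Ty.
  apply: (hull_le (affine_crossr x) _ Ty) => t /in4.
  by rewrite !inE => /or4P[]/eqP->; rewrite ?crossNr ?xa ?xb; lra.
have : cross x (b - a) <= `|k|.
  apply: (hull_le (affine_crossl (b - a)) _ (P_sub_hull Px)) => t /in4.
  rewrite !inE => /or4P[]/eqP->; rewrite ?crossNl crossBr crossxx ?(crossC a b) -/k;
  by have := ler_norm k; have := ler_norm (- k); rewrite normrN; lra.
by rewrite crossBr xa xb; lra.
Qed.

End SelfPolar.

Theorem proposition5 (R : realType) (P : point R -> Prop) :
  convex_polygon P ->
  (forall x, tau_img P x <-> polar P x) ->
  exists V : seq (point R),
    uniq V /\ (6 <= size V)%N /\ (forall v, v \in V -> is_vertex P v).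
Proof.
move=> [S P_conv_hull] tauP; have P_self_polar := tau_img_polarE tauP.
have PN := self_polar_oppr P_self_polar.
have [T [T_vertex P_sub_hull]] :=
  hull_vertices (self_polar_hull P_conv_hull P_self_polar).
have exists_cross := exists_cross_neq0 P_conv_hull P_self_polar P_sub_hull.
have e1_neq0 : (1, 0) != 0 :> point R.
  by apply/eqP => /(congr1 fst) /= /eqP; rewrite oner_eq0.
have [a aT /cross_neq0_notin] := exists_cross _ e1_neq0.
rewrite inE negb_or => /andP[a_neq0 _].
have [b bT ab_neq0] := exists_cross a a_neq0.
have [c cT c_off] := exists_vertex_off_parallelogram P_self_polar P_sub_hull
  (T_vertex a aT).1 (T_vertex b bT).1 ab_neq0.
have c_neq0 : c != 0.
  apply: contra_neq a_neq0 => c0; apply: is_vertex0 PN _ (T_vertex a aT).1.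
  by rewrite -c0; apply: T_vertex.
exists [:: a; - a; b; - b; c; - c]; split; [|split=> // v].
  apply: uniq_opp3 (@point_eqN R) a_neq0 (cross_neq0_notin ab_neq0) _.
  by rewrite in_cons negb_or c_neq0.
rewrite !inE => /or4P[|||/or3P[]] /eqP->;
  by [apply: T_vertex | apply: is_vertexN PN _; apply: T_vertex].
Qed.
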